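(* The canonical collection $\mathcal{S}$ satisfies $$\sum_{S\in\mathcal{S}}c(T_S)\ \le\ \mathrm{val}(\mathcal{S})+2\cdot\mathrm{excess}(\mathrm{OPT}).$$
   Context: Steiner Forest: finite undirected graph $G=(V,E)$ with non-negative edge costs $(c_e)_{e\in E}$ and a set $\mathcal{D}$ of demand pairs $\{a,b\}\subseteq V$ (partners); feasible solutions are $F\subseteq E$ with each demand pair in one connected component of $(V,F)$, of cost $c(F)=\sum_{e\in F}c_e$. $\mathrm{OPT}$ is a fixed optimal solution that is inclusionwise minimal (no cost-$0$ edge can be omitted keeping feasibility). For $U\subseteq V$, $\delta(U)$ is the set of edges with exactly one endpoint in $U$; $U$ separates $S$ if $S\cap U\ne\emptyset$ and $S\setminus U\ne\emptyset$. The $\varepsilon$-extended moat-growing algorithm (fixed $\varepsilon\ge0$): time $t$ increases continuously from $0$ at unit rate; it maintains tight edges $F$ (initially empty), duals $y_S(t)\ge0$ (initially $0$), and budgets of components (initially $0$). $\mathcal{C}^t$ is the family of vertex sets of connected components of $(V,F)$. A component is demand-active if it contains a vertex not connected in $(V,F)$ to some partner; budget-active if not demand-active but with positive budget; active if either; $\mathcal{A}^t$ is the set of active components. Each $y_S$, $S\in\mathcal{A}^t$, grows at unit rate; budgets of demand-active components grow at rate $\varepsilon$ and of budget-active ones decrease at rate $1$; an edge $e$ with $\sum_{S:e\in\delta(S)}y_S(t)=c_e$ becomes tight and is added to $F$; merging components add budgets. $y_S=y_S(\infty)$; $\mathcal{U}_{\mathrm{sep}}$ is the set of $U\in\mathrm{supp}(y)$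 separating some demand pair; $\mathrm{excess}(F)=c(F)-\sum_{U\in\mathcal{U}_{\mathrm{sep}}}y_U$. The deactivation time $\tau_v$ of $v$ is the largest $t$ such that for all $s<t$, $v$ lies in a set of $\mathcal{A}^s$. Vertices $u,v$ are actively connected if for some $t$ they lie in a common set of $\mathcal{C}^t$ and $\tau_u,\tau_v\ge t$ (an equivalence relation). For each $U\in\mathcal{U}_{\mathrm{sep}}$ fix a demand pair $\varphi(U)$ separated by $U$. For a demand pair $d$, $\mathrm{val}(d)=\sum_{U:\varphi(U)=d}y_U$. A demand pair $\{a,b\}$ is satisfied by a set $S$ if $\{a,b\}\subseteq S$, and by a collection if by some member; $\mathrm{val}(\mathcal{S})$ is the sum of $\mathrm{val}(d)$ over demand pairs $d$ satisfied by $\mathcal{S}$. Canonical collection: start with a family $\mathcal{F}$ in which each tree (connected component) of $\mathrm{OPT}$ is its own forest; for each $U\in\mathcal{U}_{\mathrm{sep}}$, merge all forests of $\mathcal{F}$ that connect some demand pair separated by $U$ into a single forest. For each $F\in\mathcal{F}$ let $r_F$ be a vertex of $F$ with maximum deactivation time; for each connected component $T$ of $F$, let $S$ be the set of vertices of $T$ actively connected to $r_F$; if $S\ne\emptyset$, add $S$ to $\mathcal{S}$ and let $T_S$ be the minimal subtree of $T$ connecting $S$. *)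

From mathcomp Require Import all_boot all_order all_algebra.
From mathcomp Require Import boolp reals.

Set Implicit Arguments.
Unset Strict Implicit.
Unset Printing Implicit Defensive.

Import Order.TTheory GRing.Theory Num.Theory.
Local Open Scope ring_scope.

Section SteinerForest.

(* Instance: real type R, graph (V, E) with endpoint maps src/dst (an edge
   e joins src e and dst e, undirected), costs c, demand pairs D (each a
   2-element vertex set), and the parameter eps of the algorithm. *)
Variables (R : realType) (V E : finType) (src dst : E -> V) (c : E -> R)
          (D : {set {set V}}) (eps : R).

Definition adj (F : {set E}) : rel V :=
  [rel x y | [exists e in F, ((src e == x) && (dst e == y))
                             || ((src e == y) && (dst e == x))]].

Definition conn (F : {set E}) (u v : V) : bool := connect (adj F) u v.

Definition comp (F : {set E}) (v : V) : {set V} := [set w | conn F v w].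

Definition comps (F : {set E}) : {set {set V}} := [set comp F v | v : V].

Definition feasible (F : {set E}) : Prop :=
  forall d, d \in D -> forall a b, a \in d -> b \in d -> conn F a b.

Definition cost (F : {set E}) : R := \sum_(e in F) c e.

Definition separates (U S : {set V}) : bool :=
  (S :&: U != set0) && (S :\: U != set0).

Definition crosses (e : E) (S : {set V}) : bool :=
  (src e \in S) != (dst e \in S).

Definition load (y : {set V} -> R) (e : E) : R :=
  \sum_(S : {set V} | crosses e S) y S.

(* state: current time, tight edges F, duals y, budgets b (of components) *)
Record state := State {
  st_time : R;
  st_F : {set E};
  st_y : {set V} -> R;
  st_b : {set V} -> R }.

Definition demand_active (F : {set E}) (C : {set V}) : bool :=
  [exists v in C, exists d in D,
     (v \in d) && [exists w in d, ~~ conn F v w]].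

Definition budget_active (s : state) (C : {set V}) : bool :=
  ~~ demand_active (st_F s) C && (0 < st_b s C).

Definition is_active (s : state) (C : {set V}) : bool :=
  demand_active (st_F s) C || budget_active s C.

Definition active_comps (s : state) : {set {set V}} :=
  [set C in comps (st_F s) | is_active s C].

Definition halted (s : state) : bool := active_comps s == set0.

(* add all tight edges to F; merged components add up their budgets *)
Definition close (s : state) : state :=
  State (st_time s)
        (st_F s :|: [set e | c e <= load (st_y s) e])
        (st_y s)
        (fun C' => \sum_(C in comps (st_F s) | C \subset C') st_b s C).

(* number of active sets S with e in delta(S): rate of growth of load e *)
Definition rate (s : state) (e : E) : nat :=
  #|[set C in active_comps s | crosses e C]|.

(* times until the next events: an edge becomes tight, or a budget-active
   component's budget reaches 0 *)
Definition edge_events (s : state) : seq R :=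
  [seq (c e - load (st_y s) e) / (rate s e)%:R
     | e <- enum E & (e \notin st_F s) && (0 < rate s e)%N].

Definition budget_events (s : state) : seq R :=
  [seq st_b s C | C <- enum (active_comps s) & budget_active s C].

Definition delta (s : state) : R :=
  match edge_events s ++ budget_events s with
  | x :: xs => foldr Num.min x xs
  | [::] => 1
  end.

Definition advance (s : state) : state :=
  let d := delta s in
  State (st_time s + d) (st_F s)
        (fun S => if S \in active_comps s then st_y s S + d else st_y s S)
        (fun C => if C \in comps (st_F s) then
                    (if demand_active (st_F s) C then st_b s C + eps * d
                     else if budget_active s C then st_b s C - d
                     else st_b s C)
                  else st_b s C).

Definition step (s : state) : state :=
  let s' := close s in if halted s' then s' else advance s'.

Definition init_state : state :=
  State 0 set0 (fun _ => 0) (fun _ => 0).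

Definition run (k : nat) : state := iter k step init_state.

(* the state during phase k, i.e. on [t_k, t_{k+1}) (F, components, active
   sets; duals and budgets are those at time t_k) *)
Definition phase (k : nat) : state := close (run k).

Definition covers (k : nat) (t : R) : Prop :=
  st_time (phase k) <= t /\ (t < st_time (phase k.+1) \/ halted (phase k)).

Definition comps_at (t : R) (C : {set V}) : Prop :=
  exists k, covers k t /\ C \in comps (st_F (phase k)).

Definition active_at (t : R) (v : V) : Prop :=
  exists k, covers k t /\ [exists C in active_comps (phase k), v \in C].

Definition is_deact_time (v : V) (tau : R) : Prop :=
  (forall s, 0 <= s -> s < tau -> active_at s v) /\
  (forall t, (forall s, 0 <= s -> s < t -> active_at s v) -> t <= tau).

Definition actively_connected (tau : V -> R) (u v : V) : Prop :=
  exists t, (exists C, comps_at t C /\ u \in C /\ v \in C) /\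
            t <= tau u /\ t <= tau v.

Definition Usep (y : {set V} -> R) : {set {set V}} :=
  [set U : {set V} | (y U != 0) && [exists d in D, separates U d]].

Definition excess (y : {set V} -> R) (F : {set E}) : R :=
  cost F - \sum_(U in Usep y) y U.

Definition val (y : {set V} -> R) (phi : {set V} -> {set V}) (d : {set V}) : R :=
  \sum_(U in Usep y | phi U == d) y U.

Definition satisfied_by (Ss : {set {set V}}) (d : {set V}) : bool :=
  [exists S in Ss, d \subset S].

Definition valS (y : {set V} -> R) (phi : {set V} -> {set V})
    (Ss : {set {set V}}) : R :=
  \sum_(d in D | satisfied_by Ss d) val y phi d.

(* a forest is a set of trees of OPT, a tree being given by its vertex set;
   the forest connects d if d lies within one of its trees *)
Definition connects_sep (Fo : {set {set V}}) (U : {set V}) : bool :=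
  [exists T in Fo, exists d in D, (d \subset T) && separates U d].

Definition merge_step (U : {set V}) (fam : {set {set {set V}}})
    : {set {set {set V}}} :=
  let M := [set Fo in fam | connects_sep Fo U] in
  if M == set0 then fam
  else (fam :\: M) :|: [set \bigcup_(Fo in M) Fo].

Definition canon_forests (y : {set V} -> R) (OPT : {set E})
    : {set {set {set V}}} :=
  foldr merge_step [set [set T] | T in comps OPT] (enum (Usep y)).

Definition forest_verts (Fo : {set {set V}}) : {set V} := \bigcup_(T in Fo) T.

Definition canon_collection (y : {set V} -> R) (OPT : {set E})
    (tau : V -> R) (r : {set {set V}} -> V) : {set {set V}} :=
  [set S in [set [set v : V | (v \in T) &&
                               `[< actively_connected tau v (r Fo) >]]
               | Fo : {set {set V}} in canon_forests y OPT, T : {set V} in Fo]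
     | S != set0].

Definition connects_all (F : {set E}) (S : {set V}) : Prop :=
  forall u v, u \in S -> v \in S -> conn F u v.

Definition min_subtree (OPT : {set E}) (S : {set V}) (T : {set E}) : Prop :=
  T \subset OPT /\ connects_all T S /\
  (forall T' : {set E}, T' \proper T -> ~ connects_all T' S).

End SteinerForest.

From Pilot Require Import Defs.
From mathcomp Require Import all_boot all_order all_algebra.
From mathcomp Require Import boolp reals.
From mathcomp Require Import lra.
Import Order.TTheory GRing.Theory Num.Theory.
Local Open Scope ring_scope.
Set Implicit Arguments. Unset Strict Implicit. Unset Printing Implicit Defensive.

(* Write c_e = load_e + slack_e for the final duals y, which are feasible. The
   subtrees T_S are edge-disjoint: T_S lies in one tree of OPT, and every tree
   lies in a single canonical forest. Hence the left-hand side is at most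
   sum_U y_U |delta(U) /\ (U_S T_S)| plus the slack of OPT, and charging moat by
   moat against val + 2 excess only fails for a separating moat U crossed by a
   single edge e of OPT that lies in some T_S with phi(U) unsatisfied. That
   cannot happen: by minimality S has vertices u in U and v outside U; as u and
   v are actively connected, U was formed before u deactivated; the partner of
   phi(U) inside U is demand-active until U forms, so it is actively connected
   to u, hence to the root, and so is its partner; and both partners lie in the
   tree of S, because e is OPT's only way out of U. *)

Section Connectivity.
Context {V E : finType} {src dst : E -> V}.
Implicit Types (F X : {set E}) (U C S T : {set V}) (e f : E) (x y z w : V).

Local Notation adj := (adj src dst).
Local Notation conn := (conn src dst).
Local Notation comp := (Defs.comp src dst).
Local Notation comps := (comps src dst).
Local Notation crosses := (crosses src dst).

Lemma adjP F x y : reflect (exists2 e, e \in F &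
    (src e = x /\ dst e = y) \/ (src e = y /\ dst e = x)) (adj F x y).
Proof.
apply: (iffP existsP) => [[e /andP[eF /orP[]/andP[/eqP sx /eqP dy]]]|[e eF]].
- by exists e; [|left].
- by exists e; [|right].
by case=> -[<- <-]; exists e; rewrite eF !eqxx ?orbT.
Qed.

Lemma adj_sym F : symmetric (adj F).
Proof. by move=> x y; apply/adjP/adjP => -[e eF h]; exists e; tauto. Qed.

Lemma conn_sym F x y : conn F x y = conn F y x.
Proof. exact: (sym_connect_sym (adj_sym F)). Qed.

Lemma conn_trans F y x z : conn F x y -> conn F y z -> conn F x z.
Proof. exact: connect_trans. Qed.

Lemma conn_sub F F' x y : F \subset F' -> conn F x y -> conn F' x y.
Proof.
move=> sFF'; apply: connect_sub => a b /adjP[e eF h]; apply/connect1/adjP.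
by exists e; first exact: (subsetP sFF').
Qed.

Lemma conn_edge F e : e \in F -> conn F (src e) (dst e).
Proof. by move=> eF; apply/connect1/adjP; exists e; first by []; left. Qed.

Lemma mem_comp F v w : (w \in comp F v) = conn F v w.
Proof. by rewrite inE. Qed.

Lemma comp_refl F v : v \in comp F v.
Proof. by rewrite mem_comp; apply: connect0. Qed.

Lemma comp_in_comps F v : comp F v \in comps F.
Proof. exact: imset_f. Qed.

Lemma comps_conn F C x y : C \in comps F -> x \in C -> y \in C -> conn F x y.
Proof.
by case/imsetP=> v _ -> /[!mem_comp] vx; apply: conn_trans; rewrite conn_sym.
Qed.

Lemma comps_closed F C x y : C \in comps F -> x \in C -> conn F x y -> y \in C.
Proof. by case/imsetP=> v _ -> /[!mem_comp]; apply: conn_trans. Qed.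

Lemma comps_eq F C C' x : C \in comps F -> C' \in comps F -> x \in C -> x \in C' ->
  C = C'.
Proof.
move=> hC hC' xC xC'; apply/setP => z; apply/idP/idP => zC.
  by apply: comps_closed hC' xC' _; apply: comps_conn hC xC zC.
by apply: comps_closed hC xC _; apply: comps_conn hC' xC' zC.
Qed.

Lemma comps_sub_eq F C C' : C \in comps F -> C' \in comps F -> C \subset C' -> C = C'.
Proof.
case/imsetP=> v _ -> hC' /subsetP/(_ v (comp_refl F v)).
exact: comps_eq (comp_in_comps F v) hC' (comp_refl F v).
Qed.

Lemma sum_comps_sub (R : nmodType) F C (f : {set V} -> R) : C \in comps F ->
  \sum_(C0 in comps F | C0 \subset C) f C0 = f C.
Proof.
move=> hC; apply: (big_pred1 C) => C0 /=.
by apply/andP/eqP => [[hC0 /(comps_sub_eq hC0 hC)]//|->]; rewrite hC subxx.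
Qed.

Lemma comps_not_crossed F C e : e \in F -> C \in comps F -> ~~ crosses e C.
Proof.
move=> eF hC; rewrite /crosses negbK; apply/eqP; apply/idP/idP => h.
  exact: comps_closed hC h (conn_edge eF).
by apply: comps_closed hC h _; rewrite conn_sym conn_edge.
Qed.

Lemma conn_same_side F U x y : (forall f, f \in F -> ~~ crosses f U) ->
  conn F x y -> (x \in U) = (y \in U).
Proof.
move=> hF; apply: closed_connect => a b /adjP[f /hF]; rewrite /crosses negbK.
by move=> /eqP + [][<- <-].
Qed.

Lemma conn_ind F (P : V -> Prop) x y : P x ->
  (forall a b, P a -> adj F a b -> P b) -> conn F x y -> P y.
Proof.
move=> Px step /connectP[p]; elim: p x Px => [|z p IH] x Px /=; first by move=> _ ->.
by case/andP=> axz; apply: IH; apply: step axz.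
Qed.

Lemma conn_crossing F U x y : conn F x y -> x \in U -> y \notin U ->
  exists2 f, f \in F & crosses f U && conn F x (src f).
Proof.
move=> /connectP[p]; elim: p x => [|z p IH] x /=; first by move=> _ -> ->.
move=> /andP[axz pth] ey xU yU.
case zU: (z \in U).
  have [f fF /andP[cf cz]] := IH z pth ey zU yU.
  by exists f; rewrite // cf (conn_trans (connect1 axz) cz).
case/adjP: (axz) => f fF [][sf df]; exists f; rewrite // /crosses sf df xU zU /=.
  exact: connect0.
exact: connect1.
Qed.

Lemma conn_restrict F F' x y : conn F x y ->
  (forall f, f \in F -> conn F x (src f) -> f \in F') -> conn F' x y.
Proof.
move=> cxy hF; suff [] : conn F' x y /\ conn F x y by [].
apply: (@conn_ind F (fun z => conn F' x z /\ conn F x z)) cxy => [|a b [xa' xa] ab].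
  by split; apply: connect0.
have xb := conn_trans xa (connect1 ab); split=> //.
apply: conn_trans xa' (connect1 _); case/adjP: ab => f fF h; apply/adjP; exists f => //.
by apply: hF => //; case: h => -[-> _].
Qed.

Lemma conn_setD1 F e x y : conn F x y ->
  conn (F :\ e) x y \/ exists2 w, w \in [:: src e; dst e] & conn (F :\ e) x w.
Proof.
apply: (@conn_ind F (fun z => conn (F :\ e) x z \/
  exists2 w, w \in [:: src e; dst e] & conn (F :\ e) x w)).
  by left; apply: connect0.
move=> a b Pa /adjP[f fF h].
case: (eqVneq f e) => [fe|fne].
  subst f; case: Pa => [xa|]; last by right.
  by right; exists a => //; case: h => [[<- _]|[_ <-]]; rewrite !inE eqxx ?orbT.
case: Pa => [xa|]; [left|by right].
by apply: conn_trans xa (connect1 _); apply/adjP; exists f; rewrite ?inE ?fne.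
Qed.

(* Walks from [x] and from [y] reach endpoints of [e] on the sides of [x] and [y]
   before first using [e]; as these sides agree, the endpoints coincide. *)
Lemma conn_setD1_crossing F U e x y : crosses e U ->
  (forall f, f \in F :\ e -> ~~ crosses f U) ->
  conn F x y -> (x \in U) = (y \in U) -> conn (F :\ e) x y.
Proof.
move=> ce hF cxy sxy; have side := conn_same_side hF.
case: (conn_setD1 e cxy) => [//|[w wE xw]].
rewrite conn_sym in cxy; case: (conn_setD1 e cxy) => [|[w' w'E yw']].
  by rewrite conn_sym.
suff ww' : w = w' by apply: conn_trans xw _; rewrite ww' conn_sym.
have wU : (w \in U) = (w' \in U) by rewrite -(side _ _ xw) -(side _ _ yw') sxy.
by move: wE w'E wU ce; rewrite !inE /crosses => /pred2P[]-> /pred2P[]-> // ->; rewrite eqxx.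
Qed.

Lemma unique_crossing_conn F U e x y :
  (forall f, f \in F -> crosses f U -> f = e) ->
  conn F x y -> x \in U -> y \notin U -> conn F x (src e).
Proof.
by move=> huniq cxy xU yU; have [f fF /andP[/(huniq f fF)<-]] := conn_crossing cxy xU yU.
Qed.

Lemma separatesP U S : reflect
  ((exists2 u, u \in S & u \in U) /\ exists2 v, v \in S & v \notin U) (separates U S).
Proof.
apply: (iffP andP) => [[/set0Pn[u /setIP[uS uU]] /set0Pn[v /setDP[vS vU]]]|].
  by split; [exists u|exists v].
case=> -[u uS uU] [v vS vU]; split; apply/set0Pn; [exists u|exists v].
  by rewrite inE uS uU.
by rewrite inE vS vU.
Qed.

Lemma feasible_crossing (D : {set {set V}}) F U d : feasible src dst D F -> d \in D ->
  separates U d -> exists2 f, f \in F & crosses f U.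
Proof.
move=> feas dD /separatesP[[a ad aU] [b bd bU]].
by have [f fF /andP[cf _]] := conn_crossing (feas d dD a b ad bd) aU bU; exists f.
Qed.

Lemma min_subtree_separates F S X U e : min_subtree src dst F S X -> e \in X ->
  crosses e U -> (forall f, f \in F -> crosses f U -> f = e) -> separates U S.
Proof.
case=> XF [XS Xmin] eX ce huniq; apply: contraT => nsep; exfalso.
apply: (Xmin _ (properD1 eX)) => w1 w2 w1S w2S.
apply: conn_setD1_crossing ce _ (XS _ _ w1S w2S) _.
  move=> f /setD1P[fe fX]; apply/negP => cf.
  by move: fe; rewrite (huniq f (subsetP XF f fX) cf) eqxx.
case: (boolP (w1 \in U)) => w1U; case: (boolP (w2 \in U)) => w2U //.
  by case/negP: nsep; apply/separatesP; split; [exists w1|exists w2].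
by case/negP: nsep; apply/separatesP; split; [exists w2|exists w1].
Qed.

Lemma min_subtree_in_comp F S T X f : T \in comps F -> S \subset T ->
  min_subtree src dst F S X -> f \in X -> src f \in T.
Proof.
move=> hT ST [XF [XS Xmin]] fX; apply: contraT => fT; exfalso.
apply: (Xmin _ (properD1 fX)) => w1 w2 w1S w2S.
apply: conn_restrict (XS _ _ w1S w2S) _ => g gX w1g; rewrite !inE gX andbT.
apply: contraNneq fT => <-; apply: comps_closed hT (subsetP ST _ w1S) _.
exact: conn_sub XF w1g.
Qed.

End Connectivity.

Section Merge.
Variable T : finType.
Implicit Types P M : {set {set T}}.

Lemma cover_merge P M : M \subset P -> cover ((P :\: M) :|: [set cover M]) = cover P.
Proof.
move=> sMP; rewrite [in LHS]/cover bigcup_setU big_set1 /cover -bigcup_setU.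
rewrite (_ : P :\: M :|: M = P) //; apply/setP => A; rewrite !inE.
by case: (boolP (A \in M)) => [/(subsetP sMP)->|]; rewrite /= ?orbT ?orbF.
Qed.

Lemma trivIset_merge P M : M \subset P -> trivIset P ->
  trivIset ((P :\: M) :|: [set cover M]).
Proof.
move=> sMP tP; rewrite setUC; apply: trivIsetU; [exact: trivIset1|exact: trivIsetD|].
rewrite cover1 [cover (_ :\: _)]/cover disjoint_sym.
apply: bigcup_disjoint => A AM; rewrite disjoint_sym.
apply: bigcup_disjoint => B /[!inE] /andP[BM BP].
move/trivIsetP: tP; apply; [exact: (subsetP sMP)|by []|].
by apply: contraNneq BM => <-.
Qed.

End Merge.

Section FoldrMin.
Variables (d : Order.disp_t) (T : orderType d).

Lemma foldr_min_le (x : T) s z : z \in x :: s -> (foldr Order.min x s <= z)%O.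
Proof.
elim: s z => [|a s IH] z /=; first by rewrite inE => /eqP->.
rewrite !inE ge_min => /or3P[/eqP zx|/eqP->|zs]; rewrite ?lexx //.
  by rewrite IH ?orbT // zx mem_head.
by rewrite IH ?orbT // inE zs orbT.
Qed.

Lemma foldr_min_in (x : T) s : foldr Order.min x s \in x :: s.
Proof.
elim: s => [|a s IH] /=; first exact: mem_head.
rewrite minEle; case: ifP => _; first by rewrite !inE eqxx orbT.
by move: IH; rewrite !inE => /orP[]->; rewrite ?orbT.
Qed.

End FoldrMin.

Section MoatGrowing.
Variables (R : realType) (V E : finType) (src dst : E -> V) (c : E -> R)
          (D : {set {set V}}) (eps : R).
Implicit Types (e : E) (U C : {set V}) (k : nat).

Local Notation conn := (conn src dst).
Local Notation comp := (Defs.comp src dst).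
Local Notation comps := (comps src dst).
Local Notation load := (load src dst).
Local Notation close := (close src dst c).
Local Notation advance := (advance src dst c D eps).
Local Notation halted := (halted src dst D).
Local Notation active_comps := (active_comps src dst D).
Local Notation delta := (delta src dst c D).
Local Notation rate := (rate src dst D).
Local Notation phase := (phase src dst c D eps).
Local Notation events s := (edge_events src dst c D s ++ budget_events src dst D s).

Lemma delta_le (s : state R V E) z : z \in events s -> delta s <= z.
Proof. by rewrite /delta; case: (events s) => // x xs; apply: foldr_min_le. Qed.

Lemma delta_gt0 (s : state R V E) : {in events s, forall z, 0 < z} -> 0 < delta s.
Proof.
by rewrite /delta; case: (events s) => [_|x xs pos]; [exact: ltr01|exact/pos/foldr_min_in].
Qed.

Lemma delta_mul_rate_le (s : state R V E) e : e \notin st_F s -> (0 < rate s e)%N ->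
  delta s * (rate s e)%:R <= c e - load (st_y s) e.
Proof.
move=> eF rpos; rewrite -ler_pdivlMr ?ltr0n //; apply: delta_le.
rewrite mem_cat; apply/orP; left.
apply: (map_f (fun e => (c e - load (st_y s) e) / (rate s e)%:R)).
by rewrite mem_filter eF rpos mem_enum.
Qed.

Lemma close_y (s : state R V E) : st_y (close s) = st_y s. Proof. by []. Qed.
Lemma close_time (s : state R V E) : st_time (close s) = st_time s. Proof. by []. Qed.

Lemma close_tight (s : state R V E) e :
  c e <= load (st_y (close s)) e -> e \in st_F (close s).
Proof. by move=> tight; rewrite !inE tight orbT. Qed.

Lemma phase_succ k :
  phase k.+1 = close (if halted (phase k) then phase k else advance (phase k)).
Proof. by []. Qed.

Lemma delta_phase_gt0 k : 0 < delta (phase k).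
Proof.
apply: delta_gt0 => z; rewrite mem_cat => /orP[]/mapP[x]; rewrite mem_filter.
  move=> /andP[/andP[xF rpos] _] ->; rewrite divr_gt0 ?ltr0n // subr_gt0 ltNge.
  by apply: contra xF; apply: close_tight.
by case/andP=> /andP[_ b_pos] _ ->.
Qed.

Lemma phase_time_succ k : st_time (phase k.+1) =
  st_time (phase k) + (if halted (phase k) then 0 else delta (phase k)).
Proof. by rewrite phase_succ close_time; case: ifP; rewrite ?addr0. Qed.

Lemma phase_time_le j k : (j <= k)%N -> st_time (phase j) <= st_time (phase k).
Proof.
move: j k; apply: (homo_leq (f := fun k => st_time (phase k)) (r := <=%R)).
- exact: lexx.
- by move=> y x z; apply: le_trans.
by move=> i; rewrite phase_time_succ lerDl; case: ifP => // _; apply/ltW/delta_phase_gt0.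
Qed.

Lemma phase_time_lt_succ k :
  ~~ halted (phase k) -> st_time (phase k) < st_time (phase k.+1).
Proof. by move=> /negbTE hk; rewrite phase_time_succ hk ltrDl delta_phase_gt0. Qed.

Lemma phase_F_sub j k : (j <= k)%N -> st_F (phase j) \subset st_F (phase k).
Proof.
move: j k; apply: (homo_leq (f := fun k => st_F (phase k)) (r := fun A B => A \subset B)).
- exact: subxx.
- by move=> A B C; apply: subset_trans.
by move=> i; rewrite phase_succ; case: ifP => _; apply: subsetUl.
Qed.

Lemma halted_close (s : state R V E) : halted (close s) ->
  st_F (close (close s)) = st_F (close s) /\ halted (close (close s)).
Proof.
move=> /eqP/setP hs; have hF : st_F (close (close s)) = st_F (close s).
  by rewrite /= -setUA setUid.
split => //; apply/eqP/setP => C; move: (hs C); rewrite !inE hF.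
case hC: (C \in comps _) => //=; rewrite /is_active /budget_active hF.
by rewrite (_ : st_b (close (close s)) C = st_b (close s) C) //; apply: sum_comps_sub.
Qed.

Lemma phase_halted_stable m j : halted (phase m) -> (m <= j)%N ->
  halted (phase j) /\ st_F (phase j) = st_F (phase m).
Proof.
move=> hm /subnK <-; elim: (j - m)%N => [|i [hi Fi]] //.
by rewrite addSn phase_succ hi; have [-> ->] := halted_close hi.
Qed.

Lemma phase_y_ge0 k U : 0 <= st_y (phase k) U.
Proof.
elim: k => [|k IH]; first by rewrite [st_y _ _]/= lexx.
rewrite phase_succ close_y; case: ifP => // _ /=.
by case: ifP => // _; rewrite addr_ge0 // ltW ?delta_phase_gt0.
Qed.

Lemma phase_y_support k U : st_y (phase k) U != 0 ->
  exists j, U \in comps (st_F (phase j)).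
Proof.
elim: k => [|k IH]; first by rewrite [st_y _ _]/= eqxx.
rewrite phase_succ close_y; case: ifP => // _ /=.
by case: ifP => [/[!inE] /andP[hU _] _|_ /IH//]; exists k.
Qed.

Lemma rate_eq0 (s : state R V E) e : e \in st_F s -> rate s e = 0%N.
Proof.
move=> eF; apply/eqP; rewrite cards_eq0; apply/eqP/setP => C; rewrite !inE.
case: (boolP (C \in comps _)) => //= hC.
by rewrite (negbTE (comps_not_crossed eF hC)) andbF.
Qed.

Lemma load_advance (s : state R V E) e :
  load (st_y (advance s)) e = load (st_y s) e + delta s * (rate s e)%:R.
Proof.
rewrite /load /= (eq_bigr (fun S => st_y s S +
  (if S \in active_comps s then delta s else 0))); last first.
  by move=> S _; case: ifP; rewrite ?addr0.
rewrite big_split /= -big_mkcondr; congr (_ + _).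
rewrite (eq_bigl [in [set C in active_comps s | crosses src dst e C]]).
  by rewrite sumr_const mulr_natr.
by move=> S; rewrite !inE andbC.
Qed.

Lemma load_le_cost k e : 0 <= c e -> load (st_y (phase k)) e <= c e.
Proof.
move=> ce_ge0; elim: k => [|k IH]; first by rewrite /load big1.
rewrite phase_succ close_y; case: ifP => // _; rewrite load_advance.
have [rate0|rpos] := posnP (rate (phase k) e); first by rewrite rate0 mulr0 addr0.
have eF : e \notin st_F (phase k) by apply: contraTN rpos => /rate_eq0->.
by rewrite -lerBrDl delta_mul_rate_le.
Qed.

Lemma demand_active_comp F d a b : d \in D -> a \in d -> b \in d -> ~~ conn F a b ->
  demand_active src dst D F (comp F a).
Proof.
move=> dD ad bd nab; apply/exists_inP; exists a; first exact: comp_refl.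
by apply/exists_inP; exists d; rewrite // ad; apply/exists_inP; exists b.
Qed.

Section Deactivation.
Variables (n : nat) (tau : V -> R).
Hypothesis halted_n : halted (phase n).
Hypothesis tau_deact : forall v, is_deact_time src dst c D eps v (tau v).

Local Notation covers := (covers src dst c D eps).
Local Notation comps_at := (comps_at src dst c D eps).
Local Notation active_at := (active_at src dst c D eps).
Local Notation actively_connected := (actively_connected src dst c D eps tau).

Lemma covers_phase k : covers k (st_time (phase k)).
Proof.
split; first exact: lexx.
by case: (boolP (halted (phase k))) => [|/phase_time_lt_succ]; [right|left].
Qed.

Lemma comps_at_phase k C :
  C \in comps (st_F (phase k)) -> comps_at (st_time (phase k)) C.
Proof. by exists k; split; first exact: covers_phase. Qed.

Lemma covers_exists t : 0 <= t -> exists k, covers k t.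
Proof.
move=> t_ge0; have [tn|tn] := leP (st_time (phase n)) t.
  by exists n; split; last right.
elim: n tn => [|m IH] tm; first by move: tm; rewrite ltNge t_ge0.
have [|mt] := ltP t (st_time (phase m)); first exact: IH.
by exists m; split; last left.
Qed.

Lemma covers_F_sub k k' t t' : covers k t -> covers k' t' -> t <= t' ->
  st_F (phase k) \subset st_F (phase k').
Proof.
move=> [kt _] [_ [t'k'|hk']] tt'; have [kk'|k'k] := leqP k k'.
- exact: phase_F_sub.
- by move: (le_trans (phase_time_le k'k) (le_trans kt tt')); rewrite leNgt t'k'.
- exact: phase_F_sub.
- by have [_ ->] := phase_halted_stable hk' (ltnW k'k).
Qed.

Lemma comps_at_conn t C x y k t' : comps_at t C -> x \in C -> y \in C ->
  covers k t' -> t <= t' -> conn (st_F (phase k)) x y.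
Proof.
move=> [j [jt hC]] xC yC kt' tt'.
exact: conn_sub (covers_F_sub jt kt' tt') (comps_conn hC xC yC).
Qed.

Lemma comps_at_sub t t' C C' x : comps_at t C -> comps_at t' C' -> t <= t' ->
  x \in C -> x \in C' -> C \subset C'.
Proof.
move=> hC [k [kt' hC']] tt' xC xC'; apply/subsetP => z zC.
exact: comps_closed hC' xC' (comps_at_conn hC xC zC kt' tt').
Qed.

Lemma active_at_comps_at t s C x y : comps_at t C -> x \in C -> y \in C -> t <= s ->
  active_at s y -> active_at s x.
Proof.
move=> hC xC yC ts [k [ks /exists_inP[C' hC' yC']]]; exists k; split => //.
apply/exists_inP; exists C' => //; move: hC'; rewrite inE => /andP[hC'c _].
by apply: comps_closed hC'c yC' _; rewrite conn_sym (comps_at_conn hC xC yC ks ts).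
Qed.

Lemma deact_active v s : 0 <= s -> s < tau v -> active_at s v.
Proof. exact: (tau_deact v).1. Qed.

Lemma deact_ge v t : (forall s, 0 <= s -> s < t -> active_at s v) -> t <= tau v.
Proof. exact: (tau_deact v).2. Qed.

Lemma tau_ge_comps_at t0 C x y t : comps_at t0 C -> x \in C -> y \in C ->
  t0 <= tau x -> t <= tau y -> t <= tau x.
Proof.
move=> hC xC yC t0x ty; apply: deact_ge => s s_ge0 st.
have [st0|t0s] := ltP s t0; first exact: deact_active (lt_le_trans st0 t0x).
exact: active_at_comps_at hC xC yC t0s (deact_active s_ge0 (lt_le_trans st ty)).
Qed.

Lemma actively_connected_sym x y : actively_connected x y -> actively_connected y x.
Proof. by case=> t [[C [hC [xC yC]]] [tx ty]]; exists t; split; first exists C. Qed.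

Lemma actively_connected_trans x y z :
  actively_connected x y -> actively_connected y z -> actively_connected x z.
Proof.
move=> [t1 [[C1 [hC1 [x1 y1]]] [tx1 ty1]]] [t2 [[C2 [hC2 [y2 z2]]] [ty2 tz2]]].
have [t12|t21] := leP t1 t2.
  exists t2; split; last by split=> //; apply: tau_ge_comps_at hC1 x1 y1 tx1 ty2.
  exists C2; split=> //; split=> //.
  exact: (subsetP (comps_at_sub hC1 hC2 t12 y1 y2)).
exists t1; split; last by split=> //; apply: tau_ge_comps_at hC2 z2 y2 tz2 ty1.
exists C1; split=> //; split=> //.
exact: (subsetP (comps_at_sub hC2 hC1 (ltW t21) y2 y1)).
Qed.

Lemma partner_active_at d a b k s : d \in D -> a \in d -> b \in d -> covers k s ->
  ~~ conn (st_F (phase k)) a b -> active_at s a.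
Proof.
move=> dD ad bd ks nab; exists k; split => //; apply/exists_inP.
exists (comp (st_F (phase k)) a); last exact: comp_refl.
by rewrite inE comp_in_comps /is_active (demand_active_comp dD ad bd nab).
Qed.

Lemma tau_ge_unconnected_partner d a b t : d \in D -> a \in d -> b \in d ->
  (forall s k, 0 <= s -> s < t -> covers k s -> ~~ conn (st_F (phase k)) a b) ->
  t <= tau a.
Proof.
move=> dD ad bd h; apply: deact_ge => s s_ge0 st; have [k ks] := covers_exists s_ge0.
exact: partner_active_at dD ad bd ks (h s k s_ge0 st ks).
Qed.

Lemma partners_conn_halted d a b : d \in D -> a \in d -> b \in d ->
  conn (st_F (phase n)) a b.
Proof.
move=> dD ad bd; apply: contraT => nab.
move/eqP/setP: halted_n => /(_ (comp (st_F (phase n)) a)).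
by rewrite !inE comp_in_comps /is_active (demand_active_comp dD ad bd nab).
Qed.

Lemma partners_actively_connected d a b : d \in D -> a \in d -> b \in d ->
  actively_connected a b.
Proof.
move=> dD ad bd; pose conn_at k := conn (st_F (phase k)) a b.
have [k0 ab_k0 k0_min] := ex_minnP (ex_intro conn_at n (partners_conn_halted dD ad bd)).
have tau_ge x y : x \in d -> y \in d ->
    (forall k, conn (st_F (phase k)) x y -> conn_at k) -> st_time (phase k0) <= tau x.
  move=> xd yd hxy; apply: tau_ge_unconnected_partner dD xd yd _ => s k _ sk0 [ks _].
  have kk0 : (k < k0)%N.
    rewrite ltnNge; apply/negP => /phase_time_le k0k.
    by move: (le_lt_trans (le_trans k0k ks) sk0); rewrite ltxx.
  by apply/negP => /hxy /k0_min; rewrite leqNgt kk0.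
exists (st_time (phase k0)); split.
  exists (comp (st_F (phase k0)) a); rewrite comp_refl mem_comp.
  by split=> //; apply/comps_at_phase/comp_in_comps.
split; first exact: tau_ge ad bd _.
by apply: tau_ge bd ad _ => k; rewrite conn_sym.
Qed.

Lemma tau_ge_separated_ac t0 U u v : comps_at t0 U -> actively_connected u v ->
  u \in U -> v \notin U -> t0 <= tau u.
Proof.
move=> hU [t [[C [hC [uC vC]]] [tu _]]] uU vU.
have [tt0|t0t] := leP t t0; last exact: le_trans (ltW t0t) tu.
by move: vU; rewrite (subsetP (comps_at_sub hC hU tt0 uC uU) v vC).
Qed.

Lemma tau_ge_separated_partner t0 U d a b : comps_at t0 U -> d \in D ->
  a \in d -> b \in d -> a \in U -> b \notin U -> t0 <= tau a.
Proof.
move=> hU dD ad bd aU bU; apply: tau_ge_unconnected_partner dD ad bd _ => s k _ st0 ks.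
apply/negP => ab; have hC : comps_at s (comp (st_F (phase k)) a).
  by exists k; split=> //; apply: comp_in_comps.
have sub := comps_at_sub hC hU (ltW st0) (comp_refl _ a) aU.
by move: bU; rewrite (subsetP sub) // mem_comp.
Qed.

Lemma separated_partner_ac t0 U u v d a b : comps_at t0 U -> actively_connected u v ->
  u \in U -> v \notin U -> d \in D -> a \in d -> b \in d -> a \in U -> b \notin U ->
  actively_connected a u.
Proof.
move=> hU uv uU vU dD ad bd aU bU; exists t0; split; first by exists U.
split; first exact: tau_ge_separated_partner hU dD ad bd aU bU.
exact: tau_ge_separated_ac hU uv uU vU.
Qed.

Lemma unique_crossing_subtree_satisfies OPT U t0 d e T r0 X :
  feasible src dst D OPT -> comps_at t0 U -> d \in D -> separates U d ->
  crosses src dst e U -> (forall f, f \in OPT -> crosses src dst f U -> f = e) ->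
  T \in comps OPT ->
  min_subtree src dst OPT [set v | (v \in T) && `[< actively_connected v r0 >]] X ->
  e \in X -> d \subset [set v | (v \in T) && `[< actively_connected v r0 >]].
Proof.
set S := [set v | _] => feas hU dD /separatesP[[a ad aU] [b bd bU]] ce huniq hT hX eX.
have memS w : w \in S -> w \in T /\ actively_connected w r0.
  by rewrite inE => /andP[? /asboolP].
have [[u /memS[uT ur] uU] [v /memS[vT vr] vU]] :=
  separatesP _ _ (min_subtree_separates hX eX ce huniq).
have uv := actively_connected_trans ur (actively_connected_sym vr).
have ar := actively_connected_trans (separated_partner_ac hU uv uU vU dD ad bd aU bU) ur.
have u_e := unique_crossing_conn huniq (comps_conn hT uT vT) uU vU.
have e_a : conn OPT (src e) a.
  by rewrite conn_sym; apply: unique_crossing_conn huniq (feas d dD a b ad bd) aU bU.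
apply/subsetP => x xd; rewrite inE; apply/andP; split.
  exact: comps_closed hT uT (conn_trans u_e (conn_trans e_a (feas d dD a x ad xd))).
by apply/asboolP; apply: actively_connected_trans (partners_actively_connected dD xd ad) ar.
Qed.

End Deactivation.

End MoatGrowing.

Section CanonicalForests.
Variables (R : realType) (V E : finType) (src dst : E -> V) (D : {set {set V}}).
Variables (y : {set V} -> R) (OPT : {set E}).

Local Notation forests := (canon_forests src dst D y OPT).

Lemma merge_step_cover U (fam : {set {set {set V}}}) :
  cover (merge_step D U fam) = cover fam.
Proof.
rewrite /merge_step; case: ifP => // _; apply: cover_merge.
by apply/subsetP => Fo; rewrite inE => /andP[].
Qed.

Lemma merge_step_trivIset U (fam : {set {set {set V}}}) :
  trivIset fam -> trivIset (merge_step D U fam).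
Proof.
rewrite /merge_step; case: ifP => // _; apply: trivIset_merge.
by apply/subsetP => Fo; rewrite inE => /andP[].
Qed.

Lemma cover_canon_forests : cover forests = comps src dst OPT.
Proof.
rewrite /canon_forests; elim: (enum _) => [|U l IH] /=; last by rewrite merge_step_cover.
rewrite cover_imset; apply/setP => T; apply/bigcupP/idP => [[T' hT' /set1P->]//|hT].
by exists T; rewrite ?set11.
Qed.

Lemma trivIset_canon_forests : trivIset forests.
Proof.
rewrite /canon_forests; elim: (enum _) => [|U l IH] /=; last exact: merge_step_trivIset.
apply/trivIsetP => _ _ /imsetP[T1 _ ->] /imsetP[T2 _ ->] neq.
by rewrite disjoints1 inE; apply: contraNneq neq => ->.
Qed.

Lemma canon_forest_tree Fo T : Fo \in forests -> T \in Fo -> T \in comps src dst OPT.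
Proof. by move=> hFo hT; rewrite -cover_canon_forests; apply/bigcupP; exists Fo. Qed.

Lemma canon_forests_eq Fo1 Fo2 T : Fo1 \in forests -> Fo2 \in forests ->
  T \in Fo1 -> T \in Fo2 -> Fo1 = Fo2.
Proof.
move=> h1 h2 T1 T2; apply/eqP; apply: contraT => neq.
move/trivIsetP: trivIset_canon_forests => /(_ _ _ h1 h2 neq)/disjointFr/(_ T1).
by rewrite T2.
Qed.

End CanonicalForests.

Lemma charge_le (R : realFieldType) (x : R) (a k : nat) (sep sat : bool) :
  0 <= x -> (a <= k)%N -> (sep -> 0 < k)%N -> (sep -> ~~ sat -> k = 1 -> a = 0)%N ->
  x *+ a + 2 * (if sep then x else 0) <= (if sep && sat then x else 0) + 2 * (x *+ k).
Proof.
move=> x_ge0 ak k_gt0 k1_a0; rewrite -[x *+ a]mulr_natr -[x *+ k]mulr_natr.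
have xak : x * a%:R <= x * k%:R by rewrite ler_wpM2l // ler_nat.
case: sep k_gt0 k1_a0 => [/(_ isT) k_gt0 /(_ isT) k1_a0|_ _] /=; last first.
  by have := mulr_ge0 x_ge0 (ler0n R k); lra.
have xk : x <= x * k%:R by rewrite ler_peMr // ler1n.
case: sat k1_a0 => [_|/(_ isT) k1_a0] /=; first lra.
have [k1|k_neq1] := eqVneq k 1%N; first by rewrite k1_a0 // k1 mulr0 mulr1; lra.
have k2 : (2 <= k)%N by rewrite ltn_neqAle eq_sym k_neq1 k_gt0.
have : 2 * x <= x * k%:R by rewrite mulrC ler_wpM2l // (ler_nat R 2).
lra.
Qed.

Section Charging.
Variables (R : realType) (V E : finType) (src dst : E -> V) (c : E -> R).
Variable y : {set V} -> R.
Hypothesis y_ge0 : forall U, 0 <= y U.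
Hypothesis load_le_c : forall e, load src dst y e <= c e.

Local Notation cut F U := [set e in F | crosses src dst e U].

Lemma cost_bigcup_disjoint (I : finType) (P : {pred I}) (F : I -> {set E}) :
  {in P &, forall i j e, e \in F i -> e \in F j -> i = j} ->
  cost c (\bigcup_(i in P) F i) = \sum_(i in P) cost c (F i).
Proof.
move=> disj; rewrite /cost (exchange_big_dep [in \bigcup_(i in P) F i]) /=; last first.
  by move=> i e iP eF; apply/bigcupP; exists i.
apply: eq_bigr => e /bigcupP[i0 i0P ei0]; rewrite (big_pred1 i0) // => i /=.
by apply/andP/eqP => [[iP ei]|->]; [exact: disj iP i0P e ei ei0|].
Qed.

Lemma cost_load_slack (F : {set E}) : cost c F =
  \sum_U y U *+ #|cut F U| + \sum_(e in F) (c e - load src dst y e).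
Proof.
rewrite /cost (eq_bigr (fun e => load src dst y e + (c e - load src dst y e))).
  rewrite big_split /=; congr (_ + _).
  rewrite /load (exchange_big_dep predT) //=; apply: eq_bigr => U _.
  by rewrite -sumr_const; apply: eq_bigl => e; rewrite !inE.
by move=> e _; rewrite addrC subrK.
Qed.

Lemma charging_bound (sep sat : pred {set V}) (X F : {set E}) : X \subset F ->
  (forall U, sep U -> cut F U != set0) ->
  (forall U, sep U -> ~~ sat U -> #|cut F U| = 1%N -> cut X U = set0) ->
  cost c X + 2 * \sum_(U | sep U) y U <= \sum_(U | sep U && sat U) y U + 2 * cost c F.
Proof.
move=> XF sep_cut unique_cut; rewrite !cost_load_slack.
have slack_ge0 e : 0 <= c e - load src dst y e by rewrite subr_ge0 load_le_c.
have slackX :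
    \sum_(e in X) (c e - load src dst y e) <= \sum_(e in F) (c e - load src dst y e).
  by rewrite [leRHS](big_setID X) /= (setIidPr XF) lerDl sumr_ge0.
have slackF : 0 <= \sum_(e in F) (c e - load src dst y e) by rewrite sumr_ge0.
have per_set : \sum_U (y U *+ #|cut X U| + 2 * (if sep U then y U else 0)) <=
    \sum_U ((if sep U && sat U then y U else 0) + 2 * (y U *+ #|cut F U|)).
  apply: ler_sum => U _; apply: charge_le (y_ge0 U) _ _ _.
  - by apply: subset_leq_card; apply/subsetP => e /[!inE] /andP[/(subsetP XF)-> ->].
  - by move=> sU; rewrite card_gt0 sep_cut.
  - by move=> sU nsat k1; apply/eqP; rewrite cards_eq0 (unique_cut U sU nsat k1).
rewrite !big_split /= -!mulr_sumr -!big_mkcond /= in per_set.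
lra.
Qed.

End Charging.

Lemma valSE (R : realType) (V : finType) (D : {set {set V}}) (y : {set V} -> R)
    (phi : {set V} -> {set V}) (Ss : {set {set V}}) :
  (forall U, U \in Usep D y -> phi U \in D) ->
  valS D y phi Ss = \sum_(U | (U \in Usep D y) && satisfied_by Ss (phi U)) y U.
Proof.
move=> phiD; rewrite [RHS](partition_big phi [pred d | (d \in D) && satisfied_by Ss d]) /=.
  apply: eq_bigr => d /andP[_ sat_d]; apply: eq_bigl => U.
  by case: (eqVneq (phi U) d) => [->|]; rewrite ?sat_d ?andbT ?andbF.
by move=> U /andP[/phiD -> ->].
Qed.

Section CanonicalCollection.
Variables (R : realType) (V E : finType) (src dst : E -> V) (c : E -> R).
Variables (D : {set {set V}}) (eps : R) (n : nat) (y : {set V} -> R) (OPT : {set E}).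
Variables (tau : V -> R) (phi : {set V} -> {set V}) (r : {set {set V}} -> V).
Variable TS : {set V} -> {set E}.

Local Notation ac := (actively_connected src dst c D eps tau).
Local Notation canon := (canon_collection src dst c D eps y OPT tau r).
Local Notation subtrees := (\bigcup_(S in canon) TS S).

Hypothesis TS_min : forall S, S \in canon -> min_subtree src dst OPT S (TS S).

Lemma canon_collectionP S : S \in canon -> exists Fo T,
  [/\ Fo \in canon_forests src dst D y OPT, T \in Fo &
      S = [set v | (v \in T) && `[< ac v (r Fo) >]]].
Proof. by rewrite inE => /andP[/imset2P[Fo T hFo hT ->] _]; exists Fo, T. Qed.

Lemma canon_subtrees_disjoint :
  {in canon &, forall S1 S2 e, e \in TS S1 -> e \in TS S2 -> S1 = S2}.
Proof.
move=> S1 S2 h1 h2 e e1 e2.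
have [Fo1 [T1 [hF1 hT1 dS1]]] := canon_collectionP h1.
have [Fo2 [T2 [hF2 hT2 dS2]]] := canon_collectionP h2.
have sub1 : S1 \subset T1 by rewrite dS1; apply/subsetP => v /[!inE] /andP[].
have sub2 : S2 \subset T2 by rewrite dS2; apply/subsetP => v /[!inE] /andP[].
have hT1c := canon_forest_tree hF1 hT1; have hT2c := canon_forest_tree hF2 hT2.
have x1 := min_subtree_in_comp hT1c sub1 (TS_min h1) e1.
have x2 := min_subtree_in_comp hT2c sub2 (TS_min h2) e2.
have eT : T1 = T2 := comps_eq hT1c hT2c x1 x2.
rewrite -eT in hT2 dS2.
by rewrite dS1 dS2 (canon_forests_eq hF1 hF2 hT1 hT2).
Qed.

Hypothesis OPT_feas : feasible src dst D OPT.
Hypothesis halted_n : halted src dst D (phase src dst c D eps n).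
Hypothesis y_def : y = st_y (phase src dst c D eps n).
Hypothesis tau_deact : forall v, is_deact_time src dst c D eps v (tau v).
Hypothesis phi_sep : forall U, U \in Usep D y -> phi U \in D /\ separates U (phi U).

Lemma canon_cut_empty U : U \in Usep D y -> ~~ satisfied_by canon (phi U) ->
  #|[set e in OPT | crosses src dst e U]| = 1%N ->
  [set e in subtrees | crosses src dst e U] = set0.
Proof.
move=> hU nsat /eqP/cards1P[e0 cut1]; apply/setP => e; rewrite !inE.
apply/negbTE/negP => /andP[/bigcupP[S hS eS] ce].
have huniq f : f \in OPT -> crosses src dst f U -> f = e0.
  by move=> fO cf; apply/set1P; rewrite -cut1 inE fO cf.
have e_e0 := huniq e (subsetP (TS_min hS).1 e eS) ce; subst e0.
have [dD sep] := phi_sep hU.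
have [k hk] : exists k, U \in comps src dst (st_F (phase src dst c D eps k)).
  by apply: (phase_y_support (k := n)); move: hU; rewrite y_def inE => /andP[].
have [Fo [T [hFo hT dS]]] := canon_collectionP hS.
case/negP: nsat; apply/exists_inP; exists S => //; rewrite dS.
apply: (unique_crossing_subtree_satisfies halted_n tau_deact OPT_feas
  (comps_at_phase hk) dD sep ce huniq (canon_forest_tree hFo hT) _ eS).
by rewrite -dS; apply: TS_min.
Qed.

End CanonicalCollection.

Theorem lemma6p4 (R : realType) (V E : finType) (src dst : E -> V)
    (c : E -> R) (D : {set {set V}}) (eps : R)
    (* instance assumptions *)
    (hc : forall e, 0 <= c e)
    (hD : forall d, d \in D -> #|d| = 2%N)
    (heps : 0 <= eps)
    (* OPT: a fixed inclusionwise minimal optimal solution *)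
    (OPT : {set E})
    (hOPTfeas : feasible src dst D OPT)
    (hOPTopt : forall F, feasible src dst D F -> cost c OPT <= cost c F)
    (hOPTmin : forall e, e \in OPT -> c e = 0 ->
                 ~ feasible src dst D (OPT :\ e))
    (* the algorithm has terminated at phase n; y = y(oo) *)
    (n : nat) (hn : halted src dst D (phase src dst c D eps n))
    (y : {set V} -> R) (hy : y = st_y (phase src dst c D eps n))
    (* deactivation times *)
    (tau : V -> R) (htau : forall v, is_deact_time src dst c D eps v (tau v))
    (* the fixed choice phi(U) of a separated demand pair *)
    (phi : {set V} -> {set V})
    (hphi : forall U, U \in Usep D y -> phi U \in D /\ separates U (phi U))
    (* roots r_F of maximum deactivation time *)
    (r : {set {set V}} -> V)
    (hr : forall Fo, Fo \in canon_forests src dst D y OPT ->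
            r Fo \in forest_verts Fo /\
            (forall v, v \in forest_verts Fo -> tau v <= tau (r Fo)))
    (* the minimal subtrees T_S *)
    (TS : {set V} -> {set E})
    (hTS : forall S, S \in canon_collection src dst c D eps y OPT tau r ->
             min_subtree src dst OPT S (TS S)) :
  \sum_(S in canon_collection src dst c D eps y OPT tau r) cost c (TS S)
    <= valS D y phi (canon_collection src dst c D eps y OPT tau r)
       + 2 * excess c D y OPT.
Proof.
set canon := canon_collection _ _ _ _ _ _ _ _ _.
have y_ge0 U : 0 <= y U by rewrite hy phase_y_ge0.
have load_le e : load src dst y e <= c e by rewrite hy load_le_cost ?hc.
have sub_OPT : \bigcup_(S in canon) TS S \subset OPT.
  by apply/bigcupsP => S /hTS[].
rewrite -cost_bigcup_disjoint; last exact: canon_subtrees_disjoint hTS.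
rewrite valSE => [|U /hphi[]//].
have sep_cut U : U \in Usep D y -> [set e in OPT | crosses src dst e U] != set0.
  case/hphi => dD /(feasible_crossing hOPTfeas dD)[f fO cf].
  by apply/set0Pn; exists f; rewrite inE fO cf.
have := charging_bound y_ge0 load_le sub_OPT (sep := [in Usep D y])
  (sat := fun U => satisfied_by canon (phi U)) sep_cut
  (canon_cut_empty hTS hOPTfeas hn hy htau hphi).
by rewrite /excess; lra.
Qed.
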